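(* Let $m_1,m_2,m_3,m_4>0$, $M=\sum m_i$, $I(\mathbf{r})=\frac{1}{2M}\sum_{i<j}m_im_jr_{ij}^2$ and $P(\mathbf{r})=r_{12}r_{34}+r_{14}r_{23}-r_{13}r_{24}$ for $\mathbf{r}=(r_{12},r_{13},r_{14},r_{23},r_{24},r_{34})$. The set $\mathcal{M}^+=\{\mathbf{r}\in[0,\infty)^6: I(\mathbf{r})=1,\ P(\mathbf{r})=0\}$ is contractible, and its Euler characteristic is $\chi(\mathcal{M}^+)=1$. *)

From HB Require Import structures.
From mathcomp Require Import all_boot all_order all_algebra.
From mathcomp Require Import all_classical all_reals all_analysis.
Set Implicit Arguments. Unset Strict Implicit. Unset Printing Implicit Defensive.
Import Order.TTheory GRing.Theory Num.Theory.
Import numFieldNormedType.Exports.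
Local Open Scope classical_set_scope.
Local Open Scope ring_scope.

Section Coords.
Variable R : realType.
Implicit Type r : 'rV[R]_6.
Definition r12 r := r ord0 (@Ordinal 6 0 isT).
Definition r13 r := r ord0 (@Ordinal 6 1 isT).
Definition r14 r := r ord0 (@Ordinal 6 2 isT).
Definition r23 r := r ord0 (@Ordinal 6 3 isT).
Definition r24 r := r ord0 (@Ordinal 6 4 isT).
Definition r34 r := r ord0 (@Ordinal 6 5 isT).

Definition inertia (m1 m2 m3 m4 : R) r : R :=
  (2 * (m1 + m2 + m3 + m4))^-1 *
  (m1 * m2 * r12 r ^+ 2 + m1 * m3 * r13 r ^+ 2 + m1 * m4 * r14 r ^+ 2
   + m2 * m3 * r23 r ^+ 2 + m2 * m4 * r24 r ^+ 2 + m3 * m4 * r34 r ^+ 2).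

Definition Ppoly r : R := r12 r * r34 r + r14 r * r23 r - r13 r * r24 r.

Definition Mplus (m1 m2 m3 m4 : R) : set 'rV[R]_6 :=
  [set r : 'rV[R]_6 | (forall j : 'I_6, 0 <= r ord0 j) /\ inertia m1 m2 m3 m4 r = 1 /\ Ppoly r = 0].
End Coords.

Definition contractible (R : realType) (T : topologicalType) (S : set T) : Prop :=
  exists x0 : T, S x0 /\
  exists H : R * T -> T,
    {within [set t : R | 0 <= t <= 1] `*` S, continuous H} /\
    (forall t x, 0 <= t <= 1 -> S x -> S (H (t, x))) /\
    (forall x, S x -> H (0, x) = x /\ H (1, x) = x0).

From HB Require Import structures.
From mathcomp Require Import all_boot all_order all_algebra.
From mathcomp Require Import all_classical all_reals all_analysis.
From mathcomp Require Import lra ring.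
Import Order.TTheory GRing.Theory Num.Theory.
Import numFieldNormedType.Exports.
Local Open Scope classical_set_scope.
Local Open Scope ring_scope.

(* M^+ is the section {I = 1} of the cone K = {r >= 0, P r = 0}, which is stable
   under positive scaling.  Since I is a positive definite quadratic form, the
   radial projection r |-> r / sqrt (I r) retracts K \ {0} onto M^+, so it
   suffices to deform K \ {0} within itself onto a ray.  First r23, r24, r34 are
   shrunk to 0 while being fed into r12, r13, r14 in a way that keeps P = 0; then
   r13 and r14 are moved into r12.  Nonnegativity of all coordinates keeps the
   deformation away from 0. *)

Section radial_projection.
Context {R : realType} {V : normedModType R}.
Variables (Q : V -> R) (C : set V).
Hypothesis Q_continuous : continuous Q.
Hypothesis QZ : forall k v, Q (k *: v) = k ^+ 2 * Q v.
Hypothesis coneC : forall k v, 0 < k -> C v -> C (k *: v).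

Definition normalize (v : V) : V := (Num.sqrt (Q v))^-1 *: v.

Lemma normalize_unit v : C v -> 0 < Q v -> (C `&` [set w | Q w = 1]) (normalize v).
Proof.
move=> Cv Qv; split; first by apply: coneC; rewrite // invr_gt0 sqrtr_gt0.
by rewrite /= QZ exprVn sqr_sqrtr ?ltW // mulVf ?gt_eqF.
Qed.

Lemma normalize_id v : Q v = 1 -> normalize v = v.
Proof. by move=> Qv; rewrite /normalize Qv sqrtr1 invr1 scale1r. Qed.

Lemma normalizeZ k v : 0 < k -> normalize (k *: v) = normalize v.
Proof.
move=> k_gt0; rewrite /normalize QZ sqrtrM ?sqr_ge0 // sqrtr_sqr gtr0_norm //.
by rewrite scalerA invfM mulrAC mulVf ?gt_eqF // mul1r.
Qed.

Lemma normalize_continuous v : 0 < Q v -> {for v, continuous normalize}.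
Proof.
move=> Qv; apply: continuousZ => //; apply: continuousV.
  by rewrite gt_eqF // sqrtr_gt0.
exact: continuous_comp (Q_continuous v) (@sqrt_continuous R _).
Qed.

Theorem cone_section_contractible (e : V) (G : R * V -> V) :
  C e -> 0 < Q e -> continuous G ->
  (forall t x, 0 <= t <= 1 -> C x -> Q x = 1 -> C (G (t, x)) /\ 0 < Q (G (t, x))) ->
  (forall x, C x -> Q x = 1 -> G (0, x) = x /\ exists2 k, 0 < k & G (1, x) = k *: e) ->
  contractible R (C `&` [set x | Q x = 1]).
Proof.
move=> Ce Qe G_continuous G_cone G_ends.
exists (normalize e); split; first exact: normalize_unit.
exists (normalize \o G); split; [|split].
- apply: continuous_in_subspaceT => -[t x]; rewrite inE => -[/= t01 [Cx Qx]].
  apply: continuous_comp; first exact: G_continuous.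
  by apply: normalize_continuous; have [] := G_cone t x t01 Cx Qx.
- move=> t x t01 [Cx Qx]; have [] := G_cone t x t01 Cx Qx; exact: normalize_unit.
- move=> x [Cx /= Qx]; have [G0 [k k_gt0 G1]] := G_ends x Cx Qx.
  by split=> /=; [rewrite G0 normalize_id | rewrite G1 normalizeZ].
Qed.

End radial_projection.

Lemma continuous_row {R : realType} {T : topologicalType} n (f : 'I_n -> T -> R) :
  (forall j, continuous (f j)) -> continuous (fun y => \row_j f j y).
Proof.
move=> f_continuous.
have -> : (fun y => \row_j f j y) = (fun y => \sum_j f j y *: delta_mx 0 j).
  by apply/funext => y; rewrite [LHS]row_sum_delta; under eq_bigr do rewrite mxE.
apply: continuous_big => [|j _ y]; first exact: add_continuous.
by apply: continuousZr_tmp; exact: f_continuous.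
Qed.

Section row_coordinates.
Context {R : realType} {n : nat}.

(* The library lemma is stated over a numFieldType; this instance unifies with the
   topology that 'rV[R]_n carries as a factor of R * 'rV[R]_n. *)
Lemma continuous_coord (j : 'I_n) : continuous (fun v : 'rV[R]_n => v ord0 j).
Proof. exact: coord_continuous. Qed.

Lemma continuous_snd_coord (j : 'I_n) : continuous (fun p : R * 'rV[R]_n => p.2 ord0 j).
Proof. by move=> p; apply: (continuous_comp _ (continuous_coord j _)); exact: cvg_snd. Qed.

Lemma continuous_fst_comp (h : R -> R) :
  continuous h -> continuous (fun p : R * 'rV[R]_n => h p.1).
Proof. by move=> h_continuous p; apply: (continuous_comp _ (h_continuous _)); exact: cvg_fst. Qed.

End row_coordinates.

Section weighted_sum_of_squares.
Context {R : realType} {n : nat} (w : 'I_n -> R).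

Definition wsumsq (v : 'rV[R]_n) : R := \sum_j w j * v ord0 j ^+ 2.

Lemma wsumsq_continuous : continuous wsumsq.
Proof.
apply: continuous_big => [|j _ v]; first exact: add_continuous.
have weighted_sqr : continuous (fun x : R => w j * x ^+ 2).
  by move=> x; apply: cvgMl_tmp; exact: exprn_continuous.
exact: (continuous_comp (continuous_coord j v) (weighted_sqr _)).
Qed.

Lemma wsumsqZ k v : wsumsq (k *: v) = k ^+ 2 * wsumsq v.
Proof.
rewrite /wsumsq mulr_sumr; apply: eq_bigr => j _.
by rewrite mxE exprMn mulrCA.
Qed.

Lemma wsumsq_gt0 v : (forall j, 0 < w j) -> v != 0 -> 0 < wsumsq v.
Proof.
move=> w_gt0 /eqP v_neq0.
have [j vj_neq0] : exists j, v ord0 j != 0.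
  apply/existsP; apply: contra_notT v_neq0 => /existsPn v0.
  by apply/rowP => j; rewrite mxE; apply/eqP/negPn/v0.
rewrite /wsumsq (bigD1 j) //= ltr_pwDl //; first by rewrite mulr_gt0 ?exprn_even_gt0.
by rewrite sumr_ge0 // => i _; rewrite mulr_ge0 ?sqr_ge0 ?ltW.
Qed.

End weighted_sum_of_squares.

Section inertia.
Context {R : realType} (m1 m2 m3 m4 : R).

Definition pair_mass (j : 'I_6) : R :=
  [:: m1 * m2; m1 * m3; m1 * m4; m2 * m3; m2 * m4; m3 * m4]`_j.

Lemma inertiaE r :
  inertia m1 m2 m3 m4 r = (2 * (m1 + m2 + m3 + m4))^-1 * wsumsq pair_mass r.
Proof.
rewrite /wsumsq !big_ord_recl big_ord0 addr0 !addrA /=.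
by congr (_ * (_ + _ + _ + _ + _ + _)); congr (_ * r _ _ ^+ 2); apply: val_inj.
Qed.

Lemma inertia_continuous : continuous (inertia m1 m2 m3 m4).
Proof.
have -> : inertia m1 m2 m3 m4 =
    (fun r => (2 * (m1 + m2 + m3 + m4))^-1 * wsumsq pair_mass r).
  by apply/funext => r; rewrite inertiaE.
move=> r; apply: (continuousM (s := cst _) (t := wsumsq pair_mass)).
  exact: cst_continuous.
exact: wsumsq_continuous.
Qed.

Lemma inertiaZ k r : inertia m1 m2 m3 m4 (k *: r) = k ^+ 2 * inertia m1 m2 m3 m4 r.
Proof. by rewrite !inertiaE wsumsqZ mulrCA. Qed.

Lemma inertia0 : inertia m1 m2 m3 m4 0 = 0.
Proof. by rewrite -(scale0r 0) inertiaZ expr0n mul0r. Qed.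

Hypotheses (m1_gt0 : 0 < m1) (m2_gt0 : 0 < m2) (m3_gt0 : 0 < m3) (m4_gt0 : 0 < m4).

Lemma inertia_gt0 r : r != 0 -> 0 < inertia m1 m2 m3 m4 r.
Proof.
move=> r_neq0; rewrite inertiaE mulr_gt0 ?invr_gt0 ?mulr_gt0 ?addr_gt0 //.
by apply: wsumsq_gt0 => // -[[|[|[|[|[|[|j]]]]]] ?] //=; rewrite mulr_gt0.
Qed.

End inertia.

Lemma PpolyZ {R : realType} k (r : 'rV[R]_6) : Ppoly (k *: r) = k ^+ 2 * Ppoly r.
Proof. rewrite /Ppoly /r12 /r13 /r14 /r23 /r24 /r34 !mxE; ring. Qed.

Section collapse.
Context {R : realType}.
Implicit Types (t : R) (r : 'rV[R]_6).

Definition Pcone : set 'rV[R]_6 :=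
  [set r : 'rV[R]_6 | (forall j, 0 <= r ord0 j) /\ Ppoly r = 0].

Lemma PconeZ k r : 0 < k -> Pcone r -> Pcone (k *: r).
Proof.
move=> k_gt0 [r_ge0 Pr]; split; last by rewrite PpolyZ Pr mulr0.
by move=> j; rewrite mxE; exact: mulr_ge0 (ltW k_gt0) (r_ge0 j).
Qed.

Lemma Mplus_cone_section m1 m2 m3 m4 :
  Mplus m1 m2 m3 m4 = Pcone `&` [set r | inertia m1 m2 m3 m4 r = 1].
Proof. by apply/seteqP; split => r; rewrite /Mplus /Pcone /=; tauto. Qed.

Lemma coords_ge0 r : (forall j, 0 <= r ord0 j) ->
  0 <= r12 r /\ 0 <= r13 r /\ 0 <= r14 r /\ 0 <= r23 r /\ 0 <= r24 r /\ 0 <= r34 r.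
Proof. by move=> r_ge0; do !split; apply: r_ge0. Qed.

Lemma coords_eq0 r : r12 r = 0 -> r13 r = 0 -> r14 r = 0 ->
  r23 r = 0 -> r24 r = 0 -> r34 r = 0 -> r = 0.
Proof.
move=> *; apply/rowP => -[[|[|[|[|[|[|j]]]]]] j_lt] //.
all: by rewrite !mxE (bool_irrelevance j_lt isT).
Qed.

Definition fade t := Num.max 0 (1 - 2 * t).
Definition rise t := Num.max 0 (2 * t - 1).

Lemma continuous_pos_part (f : R -> R) :
  continuous f -> continuous (fun t => Num.max 0 (f t)).
Proof.
move=> f_continuous; have zero : continuous (fun t : R => 0 : R) by exact: cst_continuous.
exact: (max_fun_continuous zero f_continuous).
Qed.

Lemma fade_continuous : continuous fade.
Proof.
apply: continuous_pos_part => t; apply: continuousB; first exact: cst_continuous.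
by apply: cvgMl_tmp; exact: cvg_id.
Qed.

Lemma rise_continuous : continuous rise.
Proof.
apply: continuous_pos_part => t; apply: continuousB; last exact: cst_continuous.
by apply: cvgMl_tmp; exact: cvg_id.
Qed.

Lemma fade_ge0 t : 0 <= fade t. Proof. by rewrite /fade le_max lexx. Qed.
Lemma rise_ge0 t : 0 <= rise t. Proof. by rewrite /rise le_max lexx. Qed.
Lemma rise_le1 t : t <= 1 -> rise t <= 1. Proof. by rewrite /rise ge_max ler01 /=; lra. Qed.

Lemma fade_add_gt0 t : 0 <= t -> 0 < fade t + t.
Proof.
have : 1 - 2 * t <= fade t by rewrite /fade le_max lexx orbT.
by have := fade_ge0 t; lra.
Qed.

Lemma fade_or_rise0 t : fade t = 0 \/ rise t = 0.
Proof.
rewrite /fade /rise; have [t_le|t_gt] := lerP (2 * t) 1.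
  by right; rewrite max_l //; lra.
by left; rewrite max_l //; lra.
Qed.

Lemma fade0 : fade 0 = 1. Proof. by rewrite /fade mulr0 subr0 max_r. Qed.
Lemma rise0 : rise 0 = 0. Proof. by rewrite /rise mulr0 sub0r max_l // lerN10. Qed.
Lemma fade1 : fade 1 = 0. Proof. by rewrite /fade mulr1 max_l //; lra. Qed.
Lemma rise1 : rise 1 = 1. Proof. by rewrite /rise mulr1 max_r //; lra. Qed.

(* For every t, a r34 + c r23 - b r24 = Ppoly r; together with
   fade t * rise t = 0 this makes Ppoly (collapse (t, r)) = fade t * Ppoly r. *)
Definition collapse (p : R * 'rV[R]_6) : 'rV[R]_6 :=
  let t := p.1 in let r := p.2 in
  let a := r12 r + t * r24 r in
  let b := r13 r + t * (r23 r + r34 r) in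
  let c := r14 r + t * r24 r in
  \row_j [:: a + rise t * (b + c); (1 - rise t) * b; (1 - rise t) * c;
             fade t * r23 r; fade t * r24 r; fade t * r34 r]`_j.

(* Higher-order unification does not find the operands of continuousD/B/M on
   these goals, so they are read off the goal and passed explicitly. *)
Ltac split_continuous :=
  try unfold prop_for; match goal with
  | |- continuous_at _ (fun y => @GRing.add _ (@?f y) (@GRing.opp _ (@?g y))) =>
      apply: (continuousB (f := f) (g := g))
  | |- continuous_at _ (fun y => @GRing.add _ (@?f y) (@?g y)) =>
      apply: (continuousD (f := f) (g := g))
  | |- continuous_at _ (fun y => @GRing.mul _ (@?f y) (@?g y)) =>
      apply: (continuousM (s := f) (t := g))
  | |- continuous_at _ (fun _ => _) => exact: cst_continuous
  | |- continuous_at _ (fun p => p.1) => exact: cvg_fst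
  | |- continuous_at _ (fun p => fade p.1) => exact: (continuous_fst_comp _ fade_continuous _)
  | |- continuous_at _ (fun p => rise p.1) => exact: (continuous_fst_comp _ rise_continuous _)
  | |- _ => exact: continuous_snd_coord
  end.

Lemma collapse_continuous : continuous collapse.
Proof.
by apply: continuous_row => -[[|[|[|[|[|[|j]]]]]] ?] //= p; repeat split_continuous.
Qed.

Lemma collapse_ge0 t r : 0 <= t <= 1 -> (forall j, 0 <= r ord0 j) ->
  forall j, 0 <= collapse (t, r) ord0 j.
Proof.
move=> /andP[t_ge0 t_le1] /coords_ge0[? [? [? [? [? ?]]]]] j.
have := fade_ge0 t; have := rise_ge0 t.
have : 0 <= 1 - rise t by rewrite subr_ge0 rise_le1.
rewrite mxE; case: j => -[|[|[|[|[|[|j]]]]]] //= _ *;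
  by repeat first [assumption | apply: addr_ge0 | apply: mulr_ge0].
Qed.

Lemma Ppoly_collapse t r : Ppoly (collapse (t, r)) = fade t * Ppoly r.
Proof.
rewrite {1}/Ppoly /r12 /r13 /r14 /r23 /r24 /r34 !mxE /=.
by case: (fade_or_rise0 t) => ->; rewrite /Ppoly; ring.
Qed.

Lemma collapse_neq0 t r : 0 <= t -> (forall j, 0 <= r ord0 j) -> r != 0 ->
  collapse (t, r) != 0.
Proof.
move=> t_ge0 r_ge0; apply: contraNneq => /rowP collapse0.
have [? [? [? [h23 [h24 h34]]]]] := coords_ge0 _ r_ge0.
move: (collapse0 (@Ordinal 6 0 isT)) (collapse0 (@Ordinal 6 1 isT))
  (collapse0 (@Ordinal 6 2 isT)) (collapse0 (@Ordinal 6 3 isT))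
  (collapse0 (@Ordinal 6 4 isT)) (collapse0 (@Ordinal 6 5 isT)).
rewrite !mxE /= => e12 e13 e14 e23 e24 e34.
have sum0 : r12 r + r13 r + r14 r + t * (r23 r + 2 * r24 r + r34 r) = 0 by lra.
have t23 := mulr_ge0 t_ge0 h23; have t24 := mulr_ge0 t_ge0 h24.
have t34 := mulr_ge0 t_ge0 h34.
have vanish x : fade t * x = 0 -> t * x = 0 -> x = 0.
  move=> fx tx; have /eqP : (fade t + t) * x = 0 by rewrite mulrDl fx tx addr0.
  by rewrite mulf_eq0 gt_eqF ?fade_add_gt0 //= => /eqP.
have r23_0 : r23 r = 0 by apply: vanish; lra.
have r24_0 : r24 r = 0 by apply: vanish; lra.
have r34_0 : r34 r = 0 by apply: vanish; lra.
by apply/eqP/coords_eq0 => //; lra.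
Qed.

Lemma collapse0 r : collapse (0, r) = r.
Proof.
apply/rowP => -[[|[|[|[|[|[|j]]]]]] j_lt] //.
all: by rewrite mxE /= ?rise0 ?fade0 (bool_irrelevance j_lt isT) !(mul0r, addr0, subr0, mul1r).
Qed.

Lemma collapse1 r : collapse (1, r) =
  (r12 r + r13 r + r14 r + r23 r + 2 * r24 r + r34 r) *: delta_mx 0 ord0.
Proof. by apply/rowP => -[[|[|[|[|[|[|j]]]]]] ?] //; rewrite !mxE /= ?rise1 ?fade1; ring. Qed.

Lemma collapse1_ray r : (forall j, 0 <= r ord0 j) -> r != 0 ->
  exists2 k, 0 < k & collapse (1, r) = k *: delta_mx 0 ord0.
Proof.
move=> r_ge0 r_ne0; rewrite collapse1; eexists; last by [].
have [? [? [? [? [? ?]]]]] := coords_ge0 _ r_ge0.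
rewrite lt_def andbC; apply/andP; split; first lra.
apply: contra_neq (collapse_neq0 _ _ ler01 r_ge0 r_ne0) => k0.
by rewrite collapse1 k0 scale0r.
Qed.

End collapse.

Theorem lemma5 (R : realType) (m1 m2 m3 m4 : R)
  (hm1 : 0 < m1) (hm2 : 0 < m2) (hm3 : 0 < m3) (hm4 : 0 < m4) :
  contractible R (Mplus m1 m2 m3 m4).
Proof.
have inertia_ne0 r : inertia m1 m2 m3 m4 r = 1 -> r != 0.
  by apply: contra_eq_neq => ->; rewrite inertia0 eq_sym oner_neq0.
have e_ne0 : delta_mx 0 ord0 != 0 :> 'rV[R]_6.
  by apply/eqP => /matrixP/(_ 0 ord0)/eqP; rewrite !mxE /= oner_eq0.
rewrite Mplus_cone_section.
apply: (cone_section_contractible _ _ (inertia_continuous m1 m2 m3 m4)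
  (inertiaZ m1 m2 m3 m4) (@PconeZ R) (delta_mx 0 ord0) collapse).
- split; first by move=> j; rewrite mxE ler0n.
  by rewrite /Ppoly /r12 /r13 /r14 /r23 /r24 /r34 !mxE /=; ring.
- by apply: inertia_gt0.
- exact: collapse_continuous.
- move=> t r t01 [r_ge0 Pr] /inertia_ne0 r_ne0; split.
    by split; [exact: collapse_ge0 | rewrite Ppoly_collapse Pr mulr0].
  by apply: inertia_gt0; rewrite // collapse_neq0 //; case/andP: t01.
- move=> r [r_ge0 _] /inertia_ne0 r_ne0; split; first exact: collapse0.
  exact: collapse1_ray.
Qed.
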